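(* Let $(X,\mathcal{F})$ be a measurable Hilbert lamination and let $f_n:X\to X$ be a sequence of MT-maps (measurable, leafwise continuous, mapping leaves into leaves) such that $(f_n(x))$ converges (in the leaf topology) for every $x\in X$. Then $\lim_nf_n$ is measurable.
   Context: A measurable Hilbert lamination is an MT-space (set with $\sigma$-algebra and topology) $X$ covered by countably many measurable open sets with MT-isomorphisms (measurable homeomorphisms with measurable inverse) onto $B\times T$, where $B$ is an open ball in a separable Hilbert space and $T$ a standard Borel space, $B\times T$ carrying the product of the norm topology on $B$ and the discrete topology on $T$ and the product $\sigma$-algebra; leaves are the connected components. *)

From HB Require Import structures.
From mathcomp Require Import all_boot all_order all_algebra.
From mathcomp Require Import all_classical all_reals.
From mathcomp Require Import topology normedtype measure.
Set Implicit Arguments. Unset Strict Implicit. Unset Printing Implicit Defensive.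
Import Order.TTheory GRing.Theory Num.Theory.
Import numFieldNormedType.Exports.
Local Open Scope classical_set_scope.
Local Open Scope ring_scope.

Definition is_topology (X : Type) (OX : set (set X)) : Prop :=
  [/\ OX set0, OX setT,
      (forall F : set (set X), F `<=` OX -> OX (\bigcup_(A in F) A)) &
      (forall A B, OX A -> OX B -> OX (A `&` B))].

Definition MTspace (X : Type) (MX OX : set (set X)) : Prop :=
  sigma_algebra setT MX /\ is_topology OX.

Definition is_metric (R : realType) (T : Type) (d : T -> T -> R) : Prop :=
  [/\ (forall x y, 0 <= d x y), (forall x y, d x y = 0 <-> x = y),
      (forall x y, d x y = d y x) &
      (forall x y z, d x z <= d x y + d y z)].

Definition metric_complete (R : realType) (T : Type) (d : T -> T -> R) : Prop :=
  forall u : nat -> T,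
    (forall e : R, 0 < e -> exists N, forall m n, (N <= m)%N -> (N <= n)%N ->
        d (u m) (u n) < e) ->
    exists l, forall e : R, 0 < e -> exists N, forall n, (N <= n)%N -> d (u n) l < e.

Definition metric_separable (R : realType) (T : Type) (d : T -> T -> R) : Prop :=
  exists D : set T, countable D /\
    forall x (e : R), 0 < e -> exists y, D y /\ d x y < e.

Definition metric_open (R : realType) (T : Type) (d : T -> T -> R) : set (set T) :=
  [set O | forall x, O x -> exists2 e : R, 0 < e & forall y, d x y < e -> O y].

Definition standard_Borel (R : realType) (T : Type) (ST : set (set T)) : Prop :=
  exists d : T -> T -> R,
    [/\ is_metric d, metric_complete d, metric_separable d &
        ST = <<s setT, metric_open d >>].

Definition is_inner_product (R : realType) (H : completeNormedModType R)
    (ip : H -> H -> R) : Prop :=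
  [/\ (forall x y, ip x y = ip y x),
      (forall (a : R) (x y z : H), ip (a *: x + y) z = a * ip x z + ip y z) &
      (forall x : H, `|x| ^+ 2 = ip x x)].

Definition separable_space (T : topologicalType) : Prop :=
  exists D : set T, countable D /\ dense D.

Definition oball (R : realType) (H : completeNormedModType R) (c : H) (r : R) : set H :=
  [set y | `|y - c| < r].

(* open sets of B x T: product of the norm topology on B and the discrete
   topology on T *)
Definition model_open (R : realType) (H : completeNormedModType R) (T : Type)
    (B : set H) : set (set (H * T)) :=
  [set W | W `<=` B `*` setT /\
     forall p, W p -> exists O : set H,
       [/\ open O, O p.1, O `<=` B & forall y, O y -> W (y, p.2)]].

Definition borel_on (R : realType) (H : completeNormedModType R) (B : set H) :
  set (set H) := <<s B, [set O | open O /\ O `<=` B] >>.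

Definition model_meas (R : realType) (H : completeNormedModType R) (T : Type)
    (B : set H) (ST : set (set T)) : set (set (H * T)) :=
  <<s B `*` setT, [set A `*` S | A in borel_on B & S in ST] >>.

(* an MT-isomorphism from the measurable open set U of (X,MX,OX) onto
   B x T, B an open ball of a separable Hilbert space, T standard Borel *)
Record hilbert_chart (R : realType) (X : Type) (MX OX : set (set X)) := HChart {
  hc_H : completeNormedModType R;
  hc_ip : hc_H -> hc_H -> R;
  hc_ipP : is_inner_product hc_ip;
  hc_sep : separable_space hc_H;
  hc_T : Type;
  hc_ST : set (set hc_T);
  hc_stdB : standard_Borel R hc_ST;
  hc_c : hc_H;
  hc_r : R;
  hc_r_gt0 : 0 < hc_r;
  hc_U : set X;
  hc_U_meas : MX hc_U;
  hc_U_open : OX hc_U;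
  hc_phi : X -> hc_H * hc_T;
  hc_psi : hc_H * hc_T -> X;
  hc_phi_into : forall x, hc_U x -> (oball hc_c hc_r `*` setT) (hc_phi x);
  hc_psi_into : forall p, (oball hc_c hc_r `*` setT) p -> hc_U (hc_psi p);
  hc_psiK : forall x, hc_U x -> hc_psi (hc_phi x) = x;
  hc_phiK : forall p, (oball hc_c hc_r `*` setT) p -> hc_phi (hc_psi p) = p;
  hc_phi_meas : forall W, model_meas (oball hc_c hc_r) hc_ST W ->
      MX (hc_U `&` hc_phi @^-1` W);
  hc_psi_meas : forall A, MX A ->
      model_meas (oball hc_c hc_r) hc_ST ((oball hc_c hc_r `*` setT) `&` hc_psi @^-1` A);
  hc_phi_cont : forall W, model_open (oball hc_c hc_r) W ->
      OX (hc_U `&` hc_phi @^-1` W);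
  hc_psi_cont : forall A, OX A ->
      model_open (oball hc_c hc_r) ((oball hc_c hc_r `*` setT) `&` hc_psi @^-1` A)
}.

Definition measurable_hilbert_lamination (R : realType) (X : Type)
    (MX OX : set (set X)) : Prop :=
  MTspace MX OX /\
  exists ch : nat -> hilbert_chart R MX OX,
    forall x, exists i, hc_U (ch i) x.

Definition connected_in (X : Type) (OX : set (set X)) (A : set X) : Prop :=
  forall O1 O2, OX O1 -> OX O2 -> A `<=` O1 `|` O2 ->
    A `&` O1 `&` O2 = set0 -> A `&` O1 = set0 \/ A `&` O2 = set0.

(* the leaf through x: its connected component *)
Definition leaf (X : Type) (OX : set (set X)) (x : X) : set X :=
  \bigcup_(A in [set A | connected_in OX A /\ A x]) A.

Definition MT_measurable (X : Type) (MX : set (set X)) (f : X -> X) : Prop :=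
  forall A, MX A -> MX (f @^-1` A).

Definition MT_continuous (X : Type) (OX : set (set X)) (f : X -> X) : Prop :=
  forall A, OX A -> OX (f @^-1` A).

Definition MT_map (X : Type) (MX OX : set (set X)) (f : X -> X) : Prop :=
  [/\ MT_measurable MX f, MT_continuous OX f &
      forall x, f @` leaf OX x `<=` leaf OX (f x)].

Definition converges_to (X : Type) (OX : set (set X)) (u : nat -> X) (l : X) : Prop :=
  forall O, OX O -> O l -> exists N, forall n, (N <= n)%N -> O (u n).

(** Countably many charts cover X, so it suffices to show that g^-1 (U `&` phi^-1 W) is
  measurable for one chart (U, phi, psi) onto B x T and every W of the product
  sigma-algebra, hence, as boxes generate it, for W = A `*` S with A open in B.
  As f n x -> g x, the point g x lies in U with phi (g x) in A `*` S iff eventually f n x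
  lies in U, with constant plaque coordinate in S and ball coordinates forming a Cauchy
  sequence that stays uniformly inside A; the converse uses completeness of H, continuity
  of psi and uniqueness of limits. These conditions are countable combinations of
  measurable sets: plaque equality is tested on balls around a countable dense subset of
  the Polish space T, the ball coordinates against a countable dense subset of H. *)

From HB Require Import structures.
From mathcomp Require Import all_boot all_order all_algebra.
From mathcomp Require Import all_classical all_reals.
From mathcomp Require Import topology normedtype measure.
From mathcomp Require Import lra.
Set Implicit Arguments. Unset Strict Implicit. Unset Printing Implicit Defensive.
Import Order.TTheory GRing.Theory Num.Theory.
Import numFieldNormedType.Exports.
Local Open Scope classical_set_scope.
Local Open Scope ring_scope.

Section SigmaAlgebra.
Variables (X : Type) (MX : set (set X)).
Hypothesis MXsigma : sigma_algebra setT MX.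

Lemma sigma_set0 : MX set0. Proof. by case: MXsigma. Qed.

Lemma sigma_setC A : MX A -> MX (~` A).
Proof. by case: MXsigma => _ MXD _ /MXD; rewrite setTD. Qed.

Lemma sigma_bigcup (F : nat -> set X) : (forall n, MX (F n)) -> MX (\bigcup_n F n).
Proof. by case: MXsigma => _ _; apply. Qed.

Lemma sigma_setU A B : MX A -> MX B -> MX (A `|` B).
Proof.
move=> MA MB; rewrite -bigcup2E; apply: sigma_bigcup => -[|[|n]] //=.
exact: sigma_set0.
Qed.

Lemma sigma_setI A B : MX A -> MX B -> MX (A `&` B).
Proof.
move=> MA MB; rewrite -[X in MX X]setCK setCI.
by apply/sigma_setC/sigma_setU; exact: sigma_setC.
Qed.

Lemma sigma_setD A B : MX A -> MX B -> MX (A `\` B).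
Proof. by move=> MA MB; rewrite setDE; apply/sigma_setI/sigma_setC. Qed.

Lemma sigma_bigcup_countable I (D : set I) (F : I -> set X) : countable D ->
  (forall i, D i -> MX (F i)) -> MX (\bigcup_(i in D) F i).
Proof.
move=> /pfcard_geP[->|/surjfunPex[e ->]] MF.
  by rewrite bigcup_set0; exact: sigma_set0.
by rewrite bigcup_image; apply: sigma_bigcup => n; apply: MF; exists n.
Qed.

Lemma sigma_bigcap_countable I (D : set I) (F : I -> set X) : countable D ->
  (forall i, D i -> MX (F i)) -> MX (\bigcap_(i in D) F i).
Proof.
move=> cD MF; rewrite -[X in MX X]setCK setC_bigcap; apply/sigma_setC.
by apply: sigma_bigcup_countable => // i /MF /sigma_setC.
Qed.

Lemma sigma_exists (P : nat -> set X) : (forall n, MX (P n)) ->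
  MX [set x | exists n, P n x].
Proof.
move=> MP; rewrite (_ : [set x | _] = \bigcup_n P n); first exact: sigma_bigcup.
by apply/seteqP; split=> x /= [n]; exists n.
Qed.

Lemma sigma_forall (P : nat -> set X) : (forall n, MX (P n)) ->
  MX [set x | forall n, P n x].
Proof.
move=> MP; rewrite (_ : [set x | _] = \bigcap_n P n).
  exact: sigma_bigcap_countable (countableP _) _.
by apply/seteqP; split=> x /= Px n //; exact: Px.
Qed.

Lemma sigma_eventually (P : nat -> nat -> set X) : (forall N n, MX (P N n)) ->
  MX [set x | exists N, forall n, (N <= n)%N -> P N n x].
Proof.
move=> MP; apply: sigma_exists => N.
exact: sigma_bigcap_countable (countableP _) _.
Qed.

Lemma sigma_iff (P Q : set X) : MX P -> MX Q -> MX [set x | P x <-> Q x].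
Proof.
move=> MP MQ; rewrite (_ : [set x | _] = (P `&` Q) `|` (~` P `&` ~` Q)).
  by apply: sigma_setU; apply: sigma_setI => //; exact: sigma_setC.
by apply/seteqP; split=> x /=; case: (pselect (P x)); tauto.
Qed.

Lemma sigma_algebra_preimage_in Y (D : set Y) (E : set X) (h : X -> Y) :
  MX (E `&` h @^-1` D) -> sigma_algebra D [set W | MX (E `&` h @^-1` W)].
Proof.
move=> MD; split => /=.
- by rewrite preimage_set0 setI0; exact: sigma_set0.
- move=> W MW; rewrite (_ : _ `&` _ = (E `&` h @^-1` D) `\` (E `&` h @^-1` W)).
    exact: sigma_setD.
  by apply/seteqP; split=> x /=; tauto.
- by move=> F MF; rewrite preimage_bigcup setI_bigcupr; exact: sigma_bigcup.
Qed.

End SigmaAlgebra.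

Lemma exists_inv_lt (R : realType) (e : R) : 0 < e -> exists k : nat, k.+1%:R^-1 < e.
Proof. by move=> /ltr_add_invr[k]; rewrite add0r; exists k. Qed.

Section NormedSpace.
Variables (R : realType) (V : completeNormedModType R).
Implicit Types (A D : set V) (y z : V) (e r : R).

Lemma open_oball y r : open (oball y r).
Proof.
rewrite (_ : oball y r = ball y r); first exact: ball_open.
by apply/seteqP; split => z; rewrite /oball /= -ball_normE /= distrC.
Qed.

Lemma open_oball_sub A y : open A -> A y -> exists2 r : R, 0 < r & oball y r `<=` A.
Proof.
move=> oA Ay; have /nbhs_ballP[r r0 rA] : nbhs y A by exact: open_nbhs_nbhs.
by exists r => // z yz; apply: rA; rewrite -ball_normE /= distrC.
Qed.

Lemma dense_oball D : dense D -> forall y e, 0 < e -> exists2 q, D q & `|y - q| < e.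
Proof.
move=> dD y e e0; have [|q [yq Dq]] := dD (oball y e) _ (open_oball y e).
  by exists y; rewrite /oball /= subrr normr0.
by exists q => //; rewrite distrC.
Qed.

Definition inset e A : set V := [set y | exists2 r : R, e < r & oball y r `<=` A].

Lemma open_inset e A : open (inset e A).
Proof.
rewrite openE => y [r er yA]; apply/nbhs_ballP.
exists (r - e) => [|z]; first by rewrite /=; lra.
rewrite -ball_normE /= distrC => yz; exists (r - `|z - y|); first by lra.
move=> w zw; apply: yA; rewrite /oball /= in zw *.
by rewrite -(subrKA z); apply: le_lt_trans (ler_normD _ _) _; lra.
Qed.

Lemma inset_oball e A y : inset e A y -> oball y e `<=` A.
Proof. by case=> r er yA z yz; apply: yA; rewrite /oball /= in yz *; lra. Qed.

Lemma open_inset_nbhs A y : open A -> A y ->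
  exists k : nat, oball y k.+1%:R^-1 `<=` inset k.+1%:R^-1 A.
Proof.
move=> oA Ay; have [r r0 yA] := open_oball_sub oA Ay.
have [k kr] := exists_inv_lt (divr_gt0 r0 (ltr0Sn R 1)).
exists k => z yz; set a := k.+1%:R^-1 in kr yz *; exists (r - a); first by lra.
move=> w zw; apply: yA; rewrite /oball /= in yz zw *.
by rewrite -(subrKA z); apply: le_lt_trans (ler_normD _ _) _; lra.
Qed.

End NormedSpace.

Lemma cvg_of_inv_approx (R : realType) (V : completeNormedModType R) (u : nat -> V) :
  (forall k : nat, exists q : V, exists N, forall n, (N <= n)%N -> `|u n - q| < k.+1%:R^-1) ->
  exists b, forall e : R, 0 < e -> exists N, forall n, (N <= n)%N -> `|b - u n| < e.
Proof.
move=> approx; have : cauchy_ex (u @ \oo).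
  move=> e /exists_inv_lt[k ke]; have [q [N Nq]] := approx k.
  exists q, N => // n /= Nn; rewrite -ball_normE /= distrC.
  exact: lt_trans (Nq n Nn) ke.
move=> /cauchy_exP/cauchy_cvg/cvg_ex[b /cvgr_dist_lt ub].
by exists b => e /ub[N _ Nb]; exists N.
Qed.

Section SeparableMetric.
Variables (R : realType) (T : Type) (d : T -> T -> R).
Hypothesis dmetric : is_metric d.

Lemma metric_open_ball q (r : R) : metric_open d [set t | d q t < r].
Proof.
have [_ _ _ dtri] := dmetric.
move=> t /= qt; exists (r - d q t) => [|s /= ts]; first by rewrite subr_gt0.
by have := dtri q t s; lra.
Qed.

Lemma eq_of_dense_balls (Dt : set T) t1 t2 :
  (forall t (e : R), 0 < e -> exists y, Dt y /\ d t y < e) ->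
  (forall q, Dt q -> forall j : nat, d q t1 < j.+1%:R^-1 <-> d q t2 < j.+1%:R^-1) ->
  t1 = t2.
Proof.
have [d0 d0E dsym dtri] := dmetric; move=> dense_Dt same_balls.
apply: contrapT => t12; have d12 : 0 < d t1 t2.
  by rewrite lt_def d0 andbT; apply/eqP => /d0E.
have [j j12] := exists_inv_lt (divr_gt0 d12 (ltr0Sn R 1)).
have [|q [Dq t1q]] := dense_Dt t1 j.+1%:R^-1; first by rewrite invr_gt0.
have qt1 : d q t1 < j.+1%:R^-1 by rewrite dsym.
have := (same_balls q Dq j).1 qt1; have := dtri t1 q t2.
by set a := j.+1%:R^-1 in j12 t1q *; lra.
Qed.

Lemma sigma_eq_separable_metric X (MX : set (set X)) (D : set X) (u v : X -> T) :
  sigma_algebra setT MX -> metric_separable d -> MX D ->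
  (forall q (r : R), MX (D `&` u @^-1` [set t | d q t < r])) ->
  (forall q (r : R), MX (D `&` v @^-1` [set t | d q t < r])) ->
  MX (D `&` [set x | u x = v x]).
Proof.
move=> MXsigma [Dt [cDt dense_Dt]] MD Mu Mv.
rewrite (_ : _ `&` _ = D `&` \bigcap_(q in Dt) \bigcap_(j in setT)
    [set x | (D `&` u @^-1` [set t | d q t < j.+1%:R^-1]) x <->
             (D `&` v @^-1` [set t | d q t < j.+1%:R^-1]) x]).
  apply: (sigma_setI MXsigma MD); apply: (sigma_bigcap_countable MXsigma) => // q _.
  apply: (sigma_bigcap_countable MXsigma (countableP _)) => j _.
  exact: sigma_iff.
apply/seteqP; split=> x /= [Dx uvx]; split => //.
  by move=> q _ j _; rewrite /= uvx.
apply: (eq_of_dense_balls dense_Dt) => q Dq j.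
by have := uvx q Dq j I; rewrite /=; tauto.
Qed.

End SeparableMetric.

Section Model.
Variables (R : realType) (H : completeNormedModType R) (T : Type).
Variables (B : set H) (ST : set (set T)).

Lemma model_meas_setX (O : set H) (S : set T) : open O -> O `<=` B -> ST S ->
  model_meas B ST (O `*` S).
Proof.
move=> oO OB SS; apply: sub_gen_smallest; exists O; last by exists S.
exact: sub_gen_smallest.
Qed.

Lemma model_open_setX1 (O : set H) (t : T) : open O -> O `<=` B ->
  model_open B (O `*` [set t]).
Proof.
move=> oO OB; split=> [p [Op _]|p [Op pt]]; first by split => //; exact: OB.
by exists O; split => // y Oy; split.
Qed.

End Model.

Section Chart.
Variables (R : realType) (X : Type) (MX OX : set (set X)).
Hypothesis MXsigma : sigma_algebra setT MX.
Variables (f : nat -> X -> X) (g : X -> X).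
Hypothesis f_measurable : forall n, MT_measurable MX (f n).
Hypothesis f_cvg : forall x, converges_to OX (fun n => f n x) (g x).
Hypothesis f_cvg_unique : forall x l, converges_to OX (fun n => f n x) l -> l = g x.
Variable c : hilbert_chart R MX OX.

Local Notation H := (hc_H c).
Local Notation T := (hc_T c).
Local Notation ST := (hc_ST (h:=c)).
Local Notation U := (hc_U c).
Local Notation phi := (hc_phi c).
Local Notation psi := (hc_psi (h:=c)).
Local Notation B := (oball (hc_c c) (hc_r c)).

Lemma chart_ST_setT : ST setT.
Proof.
have [d [_ _ _ ->]] := hc_stdB c.
by have := sigma_algebraCD (@sigma_algebra0 _ setT (metric_open d)); rewrite setD0.
Qed.

Lemma measurable_chart_coords n (O : set H) (S : set T) : open O -> ST S ->
  MX [set x | U (f n x) /\ (O `*` S) (phi (f n x))].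
Proof.
move=> oO SS; have OB : O `&` B `<=` B by exact: subIsetr.
have := f_measurable n (hc_phi_meas (model_meas_setX (openI oO (open_oball _ _)) OB SS)).
congr MX; apply/seteqP; split=> x /=; first by move=> [Ux [[Ox _] Sx]].
move=> [Ux [Ox Sx]]; split=> //; split=> //; split=> //.
by case: (hc_phi_into Ux).
Qed.

Lemma measurable_chart_fst n (O : set H) : open O ->
  MX [set x | U (f n x) /\ O (phi (f n x)).1].
Proof.
move=> oO; have := measurable_chart_coords n oO chart_ST_setT.
by congr MX; apply/seteqP; split=> x /= [Ux] => [[]|].
Qed.

Lemma measurable_chart_snd n (S : set T) : ST S ->
  MX [set x | U (f n x) /\ S (phi (f n x)).2].
Proof.
move=> SS; have := measurable_chart_coords n openT SS.
by congr MX; apply/seteqP; split=> x /= [Ux] => [[]|].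
Qed.

Lemma measurable_same_plaque n N :
  MX [set x | (U (f n x) /\ U (f N x)) /\ (phi (f n x)).2 = (phi (f N x)).2].
Proof.
have [d [dmetric _ dsep STE]] := hc_stdB c.
pose D := [set x | U (f n x) /\ U (f N x)].
have MD : MX D.
  exact (sigma_setI MXsigma (f_measurable n (hc_U_meas c)) (f_measurable N (hc_U_meas c))).
have Mball m : (forall x, D x -> U (f m x)) -> forall q (r : R),
    MX (D `&` (fun x => (phi (f m x)).2) @^-1` [set t | d q t < r]).
  move=> DU q r; have Sball : ST [set t | d q t < r].
    by rewrite STE; apply: sub_gen_smallest; exact: metric_open_ball.
  have := sigma_setI MXsigma MD (measurable_chart_snd m Sball).
  by congr MX; apply/seteqP; split=> x /= [Dx] => [[]|mx]; do ?split => //; exact: DU.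
exact (sigma_eq_separable_metric dmetric (u := fun x => (phi (f n x)).2)
  (v := fun x => (phi (f N x)).2) MXsigma dsep MD
  (Mball n (fun x => @proj1 _ _)) (Mball N (fun x => @proj2 _ _))).
Qed.

Lemma chart_coords_cvg x : U (g x) -> forall e : R, 0 < e ->
  exists N, forall n, (N <= n)%N ->
  [/\ U (f n x), `|(phi (f n x)).1 - (phi (g x)).1| < e & (phi (f n x)).2 = (phi (g x)).2].
Proof.
move=> Ug e e0; set p := phi (g x).
have OB : oball p.1 e `&` B `<=` B by exact: subIsetr.
have /hc_phi_cont W_open :=
  model_open_setX1 p.2 (openI (open_oball p.1 e) (open_oball _ _)) OB.
have [|N fN] := f_cvg (x := x) W_open.
  split => //; split => //; split; first by rewrite /oball /= subrr normr0.
  by case: (hc_phi_into Ug).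
by exists N => n /fN[Un [[pe _] pt]].
Qed.

Lemma chart_limit x b t : B b ->
  (exists N, forall n, (N <= n)%N -> U (f n x) /\ (phi (f n x)).2 = t) ->
  (forall e : R, 0 < e -> exists N, forall n, (N <= n)%N -> `|b - (phi (f n x)).1| < e) ->
  g x = psi (b, t).
Proof.
move=> Bb [N1 plaque] fb; apply/esym/f_cvg_unique => O oO Ob.
have [_ /(_ (b, t) (conj (conj Bb I) Ob))[O' [oO' O'b _ O'O]]] := hc_psi_cont c oO.
have [e e0 bO'] := open_oball_sub oO' O'b.
have [N2 fN2] := fb e e0.
exists (maxn N1 N2) => n; rewrite geq_max => /andP[/plaque[Un pt] /fN2 be].
have nO' : O' (phi (f n x)).1 by apply: bO'; rewrite /oball /= distrC.
have [_] := O'O _ nO'.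
by rewrite /= -pt -surjective_pairing hc_psiK.
Qed.

Definition plaque_settles (S : set T) : set X :=
  [set x | exists N, forall n, (N <= n)%N ->
     [/\ U (f n x), U (f N x), (phi (f n x)).2 = (phi (f N x)).2 & S (phi (f N x)).2]].

Definition coords_cauchy (D : set H) : set X :=
  [set x | forall k : nat, exists2 q, D q &
     exists N, forall n, (N <= n)%N -> U (f n x) /\ oball q k.+1%:R^-1 (phi (f n x)).1].

Definition coords_inset (A : set H) : set X :=
  [set x | exists k : nat, exists N, forall n, (N <= n)%N ->
     U (f n x) /\ inset k.+1%:R^-1 A (phi (f n x)).1].

Lemma plaque_settles_of_limit S x : U (g x) -> S (phi (g x)).2 -> plaque_settles S x.
Proof.
move=> Ug Sg; have [N fN] := chart_coords_cvg Ug ltr01.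
by exists N => n /fN[Un _ ->]; have [UN _ ->] := fN N (leqnn N).
Qed.

Lemma coords_cauchy_of_limit D x : dense D -> U (g x) -> coords_cauchy D x.
Proof.
move=> dD Ug k; set e := k.+1%:R^-1.
have e2 : 0 < e / 2 by rewrite divr_gt0 // invr_gt0.
have [q Dq gq] := dense_oball dD (phi (g x)).1 e2.
exists q => //; have [N fN] := chart_coords_cvg Ug e2.
exists N => n /fN[Un fg _]; split => //; rewrite /oball /=.
by have := ler_distD (phi (g x)).1 (phi (f n x)).1 q; lra.
Qed.

Lemma coords_inset_of_limit A x : open A -> U (g x) -> A (phi (g x)).1 -> coords_inset A x.
Proof.
move=> oA Ug Ag; have [k gA] := open_inset_nbhs oA Ag.
have [|N fN] := chart_coords_cvg Ug (e := k.+1%:R^-1); first by rewrite invr_gt0.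
by exists k, N => n /fN[Un fg _]; split => //; exact: gA.
Qed.

Lemma limit_of_coords A S D x : A `<=` B ->
  plaque_settles S x -> coords_cauchy D x -> coords_inset A x ->
  (U `&` phi @^-1` (A `*` S)) (g x).
Proof.
move=> AB [N1 settle] cauchy [k [N3 deep]].
have [_ _ _ St] := settle N1 (leqnn N1).
have approx (j : nat) : exists q : H, exists N, forall n, (N <= n)%N ->
    `|(phi (f n x)).1 - q| < j.+1%:R^-1.
  by have [q _ [N fN]] := cauchy j; exists q, N => n /fN[].
have [b fb] := cvg_of_inv_approx approx.
have Ab : A b.
  have [|N2 fN2] := fb k.+1%:R^-1; first by rewrite invr_gt0.
  have [_ /inset_oball] := deep (maxn N3 N2) (leq_maxl _ _); apply.
  exact: fN2 _ (leq_maxr _ _).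
have -> : g x = psi (b, (phi (f N1 x)).2).
  by apply: chart_limit (AB _ Ab) _ fb; exists N1 => n /settle[].
have Bbt : (B `*` setT) (b, (phi (f N1 x)).2) by split => //; exact: AB.
by split; [exact: hc_psi_into | rewrite /= hc_phiK].
Qed.

Lemma preimage_chart_boxE A S D : open A -> A `<=` B -> dense D ->
  g @^-1` (U `&` phi @^-1` (A `*` S)) =
  plaque_settles S `&` coords_cauchy D `&` coords_inset A.
Proof.
move=> oA AB dD; apply/seteqP; split=> x.
  move=> [Ug [Ag Sg]]; split; first split.
  - exact: plaque_settles_of_limit.
  - exact: coords_cauchy_of_limit.
  - exact: coords_inset_of_limit.
by move=> [[]]; exact: limit_of_coords.
Qed.

Lemma measurable_plaque_settles S : ST S -> MX (plaque_settles S).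
Proof.
move=> SS; apply: (sigma_eventually MXsigma) => N n.
have := sigma_setI MXsigma (measurable_same_plaque n N) (measurable_chart_snd N SS).
by congr MX; apply/seteqP; split=> x /= => [[[[? ?] ?] [? ?]] | [? ? ? ?]].
Qed.

Lemma measurable_coords_cauchy D : countable D -> MX (coords_cauchy D).
Proof.
move=> cD; apply: (sigma_forall MXsigma) => k.
apply: (sigma_bigcup_countable MXsigma cD) => q _.
apply: (sigma_eventually MXsigma (P := fun _ n => [set x | U (f n x) /\ _])) => _ n.
exact/measurable_chart_fst/open_oball.
Qed.

Lemma measurable_coords_inset A : MX (coords_inset A).
Proof.
apply: (sigma_exists MXsigma) => k.
apply: (sigma_eventually MXsigma (P := fun _ n => [set x | U (f n x) /\ _])) => _ n.
exact/measurable_chart_fst/open_inset.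
Qed.

Lemma measurable_preimage_open_box A S : open A -> A `<=` B -> ST S ->
  MX (g @^-1` (U `&` phi @^-1` (A `*` S))).
Proof.
move=> oA AB SS; have [D [cD dD]] := hc_sep c.
rewrite (preimage_chart_boxE S oA AB dD).
apply: sigma_setI => //; last exact: measurable_coords_inset.
apply: sigma_setI => //; [exact: measurable_plaque_settles | exact: measurable_coords_cauchy].
Qed.

Lemma measurable_preimage_box A S : borel_on B A -> ST S ->
  MX (g @^-1` (U `&` phi @^-1` (A `*` S))).
Proof.
move=> BA SS; pose E := g @^-1` (U `&` phi @^-1` (setT `*` S)).
have boxE A' :
    g @^-1` (U `&` phi @^-1` (A' `*` S)) = E `&` (fun x => (phi (g x)).1) @^-1` A'.
  by apply/seteqP; split=> x /= => [[? [? ?]] | [[? [_ ?]] ?]].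
rewrite boxE; move: A BA; apply: smallest_sub => [|O [oO OB]]; last first.
  by rewrite /= -boxE; exact: measurable_preimage_open_box.
apply: sigma_algebra_preimage_in => //; rewrite -boxE.
exact: measurable_preimage_open_box (open_oball _ _) _ SS.
Qed.

Lemma measurable_preimage_chart :
  model_meas B ST `<=` [set W | MX (g @^-1` (U `&` phi @^-1` W))].
Proof.
apply: smallest_sub => [|_ [A BA [S SS <-]]]; last exact: measurable_preimage_box.
apply: (sigma_algebra_preimage_in MXsigma (E := g @^-1` U) (h := phi \o g)).
have := measurable_preimage_open_box (open_oball (hc_c c) (hc_r c)) (@subset_refl _ _)
  chart_ST_setT.
by congr MX; apply/seteqP; split=> x /=; tauto.
Qed.

Lemma chart_restrictE A : U `&` A = U `&` phi @^-1` ((B `*` setT) `&` psi @^-1` A).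
Proof.
apply/seteqP; split=> x /= [Ux]; rewrite ?hc_psiK //; last by case.
by move=> Ax; split => //; split => //; have [] := hc_phi_into Ux.
Qed.

Lemma measurable_preimage_chart_dom A : MX A -> MX (g @^-1` (U `&` A)).
Proof.
by move=> MA; rewrite chart_restrictE; apply: measurable_preimage_chart; exact: hc_psi_meas.
Qed.

End Chart.

Theorem mainTheorem14 (R : realType) (X : Type) (MX OX : set (set X))
  (f : nat -> X -> X) (g : X -> X) :
  measurable_hilbert_lamination R MX OX ->
  (forall n, MT_map MX OX (f n)) ->
  (forall x, exists! l, converges_to OX (fun n => f n x) l) ->
  (forall x, converges_to OX (fun n => f n x) (g x)) ->
  MT_measurable MX g.
Proof.
move=> [[MXsigma _] [ch cover]] f_MT lim_exists_unique f_cvg A MA.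
have f_measurable n : MT_measurable MX (f n) by case: (f_MT n).
have lim_unique x l : converges_to OX (fun n => f n x) l -> l = g x.
  move=> xl; have [l0 [_ l0E]] := lim_exists_unique x.
  by rewrite -(l0E _ xl) (l0E _ (f_cvg x)).
rewrite (_ : g @^-1` A = \bigcup_i g @^-1` (hc_U (ch i) `&` A)).
  apply: (sigma_bigcup MXsigma) => i.
  exact: measurable_preimage_chart_dom.
apply/seteqP; split=> [x Agx|x [i _ []] //].
by have [i Ui] := cover (g x); exists i.
Qed.
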